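(* Let $n$ be the number of validators and let $f\in[0,n]$. If two conflicting chains are finalized according to any two respective views, then at least $\frac{n}{3}$ validators can be detected (from the messages in those views) to have violated either $\mathbf{E_1}$ or $\mathbf{E_2}$.
   Context: A set of $n$ validators exchange signed messages. A block is a pair $B=(b,p)$ where $b$ is a body (containing a reference to a parent block) and $p\ge 0$ is its slot; a parent always has strictly smaller slot; the genesis block $B_{\text{genesis}}=(b_{-1},-1)$ has no parent. Chains are identified with their last block; $\chi.p$ is the slot of its last block; $\preceq$ is the prefix relation and two chains conflict if neither is a prefix of the other. A view is a set of messages. A checkpoint is $\mathcal{C}=(\chi,c)$ with $c$ a slot. An FFG-vote $\mathcal{C}_1\to\mathcal{C}_2$ (source, target) is valid iff $\mathcal{C}_1.c<\mathcal{C}_2.c$ and $\mathcal{C}_1.\chi\preceq\mathcal{C}_2.\chi$; FFG-votes are carried inside VOTE messages of validators. In a view $\mathcal{V}$: $\mathcal{C}$ is justified iff $\mathcal{C}=(B_{\text{genesis}},0)$ or there is a set of VOTE messages in $\mathcal{V}$ from at least $\frac{2}{3}n$ distinct validators whose FFG-votes $\mathcal{S}\to\mathcal{T}$ are all valid, with $\mathcal{S}$ justified in $\mathcal{V}$, $\mathcal{S}.\chi\preceq\mathcal{C}.\chi\preceq\mathcal{T}.\chi$ and $\mathcal{T}.c=\mathcal{C}.c$. $\mathcal{C}$ is finalized iff $\mathcal{C}=(B_{\text{genesis}},0)$ or $\mathcal{C}$ is justified and there is a set of VOTE messages in $\mathcal{V}$ from at least $\frac{2}{3}n$ distinct validators each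 carrying a valid FFG-vote $\mathcal{C}\to\mathcal{T}$ with $\mathcal{T}.c=\mathcal{C}.c+1$. A chain $\chi$ is finalized according to $\mathcal{V}$ iff $\chi\preceq\mathcal{C}.\chi$ for some checkpoint $\mathcal{C}$ finalized in $\mathcal{V}$. Checkpoint preorder: $\mathcal{C}\le\mathcal{C}'$ iff $\mathcal{C}.c<\mathcal{C}'.c$, or $\mathcal{C}.c=\mathcal{C}'.c$ and $\mathcal{C}.\chi.p\le\mathcal{C}'.\chi.p$; $\mathcal{C}<\mathcal{C}'$ means $\mathcal{C}\le\mathcal{C}'$ and not $\mathcal{C}'\le\mathcal{C}$. A validator violates $\mathbf{E_1}$ if it sent two distinct FFG-votes $\mathcal{C}_1\to\mathcal{C}_2$, $\mathcal{C}_3\to\mathcal{C}_4$ with $\mathcal{C}_2.c=\mathcal{C}_4.c$; it violates $\mathbf{E_2}$ if it sent two distinct FFG-votes with $\mathcal{C}_3<\mathcal{C}_1$ and $\mathcal{C}_2.c<\mathcal{C}_4.c$. *)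

From mathcomp Require Import all_boot all_order all_algebra.
Set Implicit Arguments. Unset Strict Implicit. Unset Printing Implicit Defensive.
Import Order.TTheory GRing.Theory Num.Theory.

(* Chains are
   identified with their last block. *)
Record blocktree (B : Type) := BlockTree {
  genesis : B;
  parent  : B -> option B;
  slot    : B -> int;
  slot_genesis : slot genesis = (-1)%R;
  parent_genesis : parent genesis = None;
  slot_nonneg : forall b, b <> genesis -> (0 <= slot b)%R;
  parent_exists : forall b, b <> genesis -> exists b', parent b = Some b';
  parent_slot : forall b b', parent b = Some b' -> (slot b' < slot b)%R
}.

Section Defs.
Variables (B : Type) (T : blocktree B).

Definition prefix (chi1 chi2 : B) : Prop :=
  exists k : nat, iter k (fun o => obind (parent T) o) (Some chi2) = Some chi1.

Definition conflicting (chi1 chi2 : B) : Prop :=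
  ~ prefix chi1 chi2 /\ ~ prefix chi2 chi1.

Record checkpoint := Checkpoint { cp_chain : B; cp_slot : nat }.

Definition genesis_cp : checkpoint := Checkpoint (genesis T) 0.

Record ffg_vote := FFGVote { ffg_source : checkpoint; ffg_target : checkpoint }.

Definition valid_ffg (v : ffg_vote) : Prop :=
  (cp_slot (ffg_source v) < cp_slot (ffg_target v))%N /\
  prefix (cp_chain (ffg_source v)) (cp_chain (ffg_target v)).

Definition cp_le (C C' : checkpoint) : Prop :=
  (cp_slot C < cp_slot C')%N \/
  (cp_slot C = cp_slot C' /\ (slot T (cp_chain C) <= slot T (cp_chain C'))%R).

Definition cp_lt (C C' : checkpoint) : Prop := cp_le C C' /\ ~ cp_le C' C.

Variable n : nat.

(* A VOTE message (only its sender and its FFG vote matter here). *)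
Record vote_msg := VoteMsg { sender : 'I_n; msg_ffg : ffg_vote }.

Definition view := vote_msg -> Prop.

Definition view_union (V1 V2 : view) : view := fun m => V1 m \/ V2 m.

Inductive justified (V : view) : checkpoint -> Prop :=
| justified_genesis : justified V genesis_cp
| justified_votes : forall C : checkpoint,
    (exists W : {set 'I_n}, (2 * n <= 3 * #|W|)%N /\
       forall w, w \in W -> exists m : vote_msg,
         V m /\ sender m = w /\ valid_ffg (msg_ffg m) /\
         justified V (ffg_source (msg_ffg m)) /\
         prefix (cp_chain (ffg_source (msg_ffg m))) (cp_chain C) /\
         prefix (cp_chain C) (cp_chain (ffg_target (msg_ffg m))) /\
         cp_slot (ffg_target (msg_ffg m)) = cp_slot C) ->
    justified V C.

Definition finalized (V : view) (C : checkpoint) : Prop :=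
  C = genesis_cp \/
  (justified V C /\
   exists W : {set 'I_n}, (2 * n <= 3 * #|W|)%N /\
     forall w, w \in W -> exists m : vote_msg,
       [/\ V m, sender m = w, valid_ffg (msg_ffg m),
           ffg_source (msg_ffg m) = C
         & cp_slot (ffg_target (msg_ffg m)) = (cp_slot C).+1]).

Definition finalized_chain (V : view) (chi : B) : Prop :=
  exists C : checkpoint, finalized V C /\ prefix chi (cp_chain C).

Definition violates_E1 (V : view) (v : 'I_n) : Prop :=
  exists m1 m2 : vote_msg,
    V m1 /\ V m2 /\ sender m1 = v /\ sender m2 = v /\
    msg_ffg m1 <> msg_ffg m2 /\
    cp_slot (ffg_target (msg_ffg m1)) = cp_slot (ffg_target (msg_ffg m2)).

Definition violates_E2 (V : view) (v : 'I_n) : Prop :=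
  exists m1 m2 : vote_msg,
    V m1 /\ V m2 /\ sender m1 = v /\ sender m2 = v /\
    msg_ffg m1 <> msg_ffg m2 /\
    cp_lt (ffg_source (msg_ffg m2)) (ffg_source (msg_ffg m1))
    /\ (cp_slot (ffg_target (msg_ffg m1)) < cp_slot (ffg_target (msg_ffg m2)))%N.

End Defs.

(* Let C1, C2 be finalized checkpoints extending the two conflicting chains,
   with C1 <= C2 in the checkpoint preorder.  Follow the justification of C2
   backwards, always to the source of some supermajority link whose source is
   still >= C1.  If this reaches C1's slot, two 2n/3-quorums justified
   conflicting checkpoints of equal slot, so at least n/3 validators voted
   twice for that target slot (E1).  Otherwise some link into a justified
   checkpoint J has, for every voter, a source below C1; the n/3 validators in
   both that link and C1's finalizing link then cast the vote C1 -> C1+1 and a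
   vote surrounding it (E2), or two votes with target slot C1+1 (E1). *)
From Pilot Require Import Defs.
From mathcomp Require Import all_boot all_order all_algebra.
From mathcomp Require Import zify.
From Stdlib Require Import Classical.
Import Order.TTheory GRing.Theory Num.Theory.
Set Implicit Arguments. Unset Strict Implicit.

Local Notation prefix := Defs.prefix.

Section Prefix.
Variables (B : Type) (T : blocktree B).

Lemma iter_parent_none k : iter k (fun o => obind (parent T) o) None = None.
Proof. by elim: k => //= k ->. Qed.

Lemma prefix_refl a : prefix T a a.
Proof. by exists 0. Qed.

Lemma prefix_trans a b c : prefix T a b -> prefix T b c -> prefix T a c.
Proof. by move=> [k1 H1] [k2 H2]; exists (k1 + k2); rewrite iterD H2 H1. Qed.

Lemma prefix_total a b c : prefix T a c -> prefix T b c -> prefix T a b \/ prefix T b a.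
Proof.
move=> [k1 H1] [k2 H2]; case: (leqP k1 k2) => hk.
- by right; exists (k2 - k1); rewrite -H1 -iterD subnK.
- by left; exists (k1 - k2); rewrite -H2 -iterD subnK // ltnW.
Qed.

Lemma iter_parent_slot k a b :
  iter k.+1 (fun o => obind (parent T) o) (Some b) = Some a -> (slot T a < slot T b)%R.
Proof.
elim: k b => [|k IH] b.
  by rewrite /=; case E: (parent T b) => [b'|] //= [<-]; apply: parent_slot E.
rewrite iterSr /=; case E: (parent T b) => [b'|]; last by rewrite iter_parent_none.
by move=> /IH /lt_trans; apply; apply: parent_slot E.
Qed.

Lemma prefix_slot_lt a b : prefix T a b -> a <> b -> (slot T a < slot T b)%R.
Proof. by move=> [[|k] H] hne; [case: H => /esym | apply: iter_parent_slot H]. Qed.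

Lemma prefix_by_slot a b c :
  prefix T a c -> prefix T b c -> (slot T a <= slot T b)%R -> prefix T a b.
Proof.
move=> pac pbc hab; case: (prefix_total pac pbc) => // pba.
case: (classic (b = a)) => [->|nba]; first exact: prefix_refl.
by have := prefix_slot_lt pba nba; rewrite ltNge hab.
Qed.

Lemma slot_lt0_genesis b : (slot T b < 0)%R -> b = genesis T.
Proof.
move=> hb; apply: NNPP => nbg.
by move: (slot_nonneg nbg); rewrite leNgt hb.
Qed.

Lemma genesis_prefix b : prefix T (genesis T) b.
Proof.
suff gen_prefix N : forall b, (slot T b < N%:Z)%R -> prefix T (genesis T) b.
  by apply: (gen_prefix (absz (slot T b)).+1); lia.
elim: N => [|N IH] {}b hb.
  by rewrite (slot_lt0_genesis hb); apply: prefix_refl.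
case: (classic (b = genesis T)) => [->|nbg]; first exact: prefix_refl.
have [b' E] := parent_exists nbg; have := parent_slot E => ltb'b.
apply: (prefix_trans (b := b')); first by apply: IH; lia.
by exists 1; rewrite /= E.
Qed.

Lemma conflicting_ext a b a' b' :
  conflicting T a b -> prefix T a a' -> prefix T b b' -> conflicting T a' b'.
Proof.
move=> [nab nba] paa pbb; split=> [pab'|pba'].
- by case: (prefix_total (prefix_trans paa pab') pbb).
- by case: (prefix_total paa (prefix_trans pbb pba')).
Qed.

Lemma cp_le_total (C C' : checkpoint B) : cp_le T C C' \/ cp_le T C' C.
Proof. rewrite /cp_le; lia. Qed.

Lemma cp_not_le_lt (C C' : checkpoint B) : ~ cp_le T C C' -> cp_lt T C' C.
Proof. rewrite /cp_lt /cp_le; lia. Qed.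

Lemma cp_lt_irrefl (C : checkpoint B) : ~ cp_lt T C C.
Proof. by case. Qed.

End Prefix.

Definition quorum n (W : {set 'I_n}) : Prop := (2 * n <= 3 * #|W|)%N.

Lemma quorumI n (W1 W2 : {set 'I_n}) :
  quorum W1 -> quorum W2 -> (n <= 3 * #|W1 :&: W2|)%N.
Proof.
rewrite /quorum => q1 q2; have := cardsUI W1 W2.
by have := max_card (W1 :|: W2); rewrite card_ord; lia.
Qed.

Section Slashing.
Variables (B : Type) (T : blocktree B) (n : nat).

Definition slashable (U : view B n) (v : 'I_n) : Prop :=
  violates_E1 U v \/ violates_E2 T U v.

Definition slashable_third (U : view B n) : Prop :=
  exists W : {set 'I_n}, (n <= 3 * #|W|)%N /\ forall v, v \in W -> slashable U v.

Definition justifying_vote (V : view B n) (C : checkpoint B) (w : 'I_n)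
    (m : vote_msg B n) : Prop :=
  V m /\ sender m = w /\ valid_ffg T (msg_ffg m) /\
  justified T V (ffg_source (msg_ffg m)) /\
  prefix T (cp_chain (ffg_source (msg_ffg m))) (cp_chain C) /\
  prefix T (cp_chain C) (cp_chain (ffg_target (msg_ffg m))) /\
  cp_slot (ffg_target (msg_ffg m)) = cp_slot C.

Definition finalizing_vote (V : view B n) (C : checkpoint B) (w : 'I_n)
    (m : vote_msg B n) : Prop :=
  [/\ V m, sender m = w, valid_ffg T (msg_ffg m), ffg_source (msg_ffg m) = C
    & cp_slot (ffg_target (msg_ffg m)) = (cp_slot C).+1].

Lemma justified_inv (V : view B n) C : justified T V C ->
  C = genesis_cp T \/ exists W : {set 'I_n},
    quorum W /\ forall w, w \in W -> exists m, justifying_vote V C w m.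
Proof. by case=> [|C0 H]; [left|right]. Qed.

Lemma finalized_inv (V : view B n) C : finalized T V C ->
  C = genesis_cp T \/ justified T V C /\ exists W : {set 'I_n},
    quorum W /\ forall w, w \in W -> exists m, finalizing_vote V C w m.
Proof. by []. Qed.

Lemma finalized_justified (V : view B n) C : finalized T V C -> justified T V C.
Proof. by case=> [->|[]//]; apply: justified_genesis. Qed.

Lemma slashable_third_of_quorums U (W1 W2 : {set 'I_n}) :
  quorum W1 -> quorum W2 ->
  (forall v, v \in W1 -> v \in W2 -> slashable U v) -> slashable_third U.
Proof.
move=> q1 q2 HW; exists (W1 :&: W2); split; first exact: quorumI.
by move=> v; rewrite inE => /andP[]; apply: HW.
Qed.

Lemma slashable_surround U v m1 m2 :
  U m1 -> U m2 -> sender m1 = v -> sender m2 = v ->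
  cp_slot (ffg_target (msg_ffg m1)) = (cp_slot (ffg_source (msg_ffg m1))).+1 ->
  cp_lt T (ffg_source (msg_ffg m2)) (ffg_source (msg_ffg m1)) ->
  (cp_slot (ffg_source (msg_ffg m1)) < cp_slot (ffg_target (msg_ffg m2)))%N ->
  slashable U v.
Proof.
move=> Um1 Um2 sm1 sm2 t1 lt21 s12.
have ne12 : msg_ffg m1 <> msg_ffg m2 by move=> e; move: lt21; rewrite e; apply: cp_lt_irrefl.
case: (ltngtP (cp_slot (ffg_target (msg_ffg m1))) (cp_slot (ffg_target (msg_ffg m2)))) => e.
- by right; exists m1, m2.
- by move: e; rewrite t1 ltnS leqNgt s12.
- by left; exists m1, m2.
Qed.

Variables (Va Vb U : view B n).
Hypotheses (VaU : forall m, Va m -> U m) (VbU : forall m, Vb m -> U m).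

Lemma slashable_same_slot (C S : checkpoint B) :
  justified T Va C -> justified T Vb S -> cp_slot C = cp_slot S ->
  (slot T (cp_chain C) <= slot T (cp_chain S))%R ->
  ~ prefix T (cp_chain C) (cp_chain S) -> slashable_third U.
Proof.
move=> hC hS eCS leCS nCS.
case: (justified_inv hC) => [eC|[W1 [q1 H1]]].
  by case: nCS; rewrite eC; apply: genesis_prefix.
case: (justified_inv hS) => [eS|[W2 [q2 H2]]].
  case: nCS; rewrite (@slot_lt0_genesis _ T (cp_chain C)); first exact: genesis_prefix.
  by move: leCS; rewrite eS /= slot_genesis; lia.
apply: (slashable_third_of_quorums q1 q2) => v.
move=> /H1 [m1 [Vm1 [sm1 [_ [_ [_ [pC1 tC1]]]]]]] /H2 [m2 [Vm2 [sm2 [_ [_ [_ [pS2 tS2]]]]]]].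
left; exists m1, m2; do 4 (split; first by auto).
split; last by rewrite tC1 tS2.
by move=> e; apply: nCS; rewrite e in pC1; apply: prefix_by_slot pC1 pS2 leCS.
Qed.

Lemma slashable_finalized_justified (C J : checkpoint B) :
  finalized T Va C -> justified T Vb J -> cp_le T C J ->
  ~ prefix T (cp_chain C) (cp_chain J) -> slashable_third U.
Proof.
case/finalized_inv=> [->|[hC [W1 [q1 H1]]]].
  by move=> _ _ []; apply: genesis_prefix.
have [N] := ubnP (cp_slot J); elim: N J => [|N IH] J //= hN hJ leCJ nCJ.
case: leCJ => [ltCJ|[eCJ leCJ]]; last exact: slashable_same_slot hC hJ eCJ leCJ nCJ.
case: (justified_inv hJ) => [eJ|[W2 [q2 H2]]]; first by rewrite eJ in ltCJ.
case: (classic (exists w m, justifying_vote Vb J w m /\ cp_le T C (ffg_source (msg_ffg m)))).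
  move=> [w [m [[_ [_ [[ltS _] [hS [pSJ [_ tJ]]]]]] leCS]]].
  apply: (IH _ _ hS leCS); first by rewrite -ltnS; apply: leq_trans hN; rewrite -tJ.
  by move=> pCS; apply: nCJ; apply: prefix_trans pCS pSJ.
(* Each vote of the link into J now surrounds its sender's vote finalizing C. *)
move=> nleCS; apply: (slashable_third_of_quorums q1 q2) => v /H1 [m1 [Vm1 sm1 _ src1 t1]].
move=> /H2 [m2 hm2]; have [Vm2 [sm2 [_ [_ [_ [_ t2]]]]]] := hm2.
have lt21 : cp_lt T (ffg_source (msg_ffg m2)) C.
  by apply: cp_not_le_lt => leCS; apply: nleCS; exists v, m2.
by apply: (slashable_surround (VaU Vm1) (VbU Vm2) sm1 sm2); rewrite src1 // t2.
Qed.

End Slashing.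

Theorem lemma4p2 (B : Type) (T : blocktree B) (n f : nat) (hf : (f <= n)%N)
  (V1 V2 : view B n) (chi1 chi2 : B) :
  finalized_chain T V1 chi1 -> finalized_chain T V2 chi2 ->
  conflicting T chi1 chi2 ->
  exists W : {set 'I_n}, (n <= 3 * #|W|)%N /\
    forall v, v \in W ->
      violates_E1 (view_union V1 V2) v \/ violates_E2 T (view_union V1 V2) v.
Proof.
move=> [C1 [hC1 p1]] [C2 [hC2 p2]] conf12.
have [n12 n21] := conflicting_ext conf12 p1 p2.
have V1U : forall m, V1 m -> view_union V1 V2 m by left.
have V2U : forall m, V2 m -> view_union V1 V2 m by right.
case: (cp_le_total T C1 C2) => le.
- exact: (slashable_finalized_justified V1U V2U hC1 (finalized_justified hC2) le n12).
- exact: (slashable_finalized_justified V2U V1U hC2 (finalized_justified hC1) le n21).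
Qed.
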